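(* Let $G=(V,E)$ be a graph on $n$ vertices and $\epsilon>0$. Consider the algorithm that sets $V_1=V$, $E_1=E$ and for $i=1,\dots,n$: lets $w_i=(4/\epsilon)\sqrt{n/(n-i+1)}$, picks a vertex $v\in V_i$ with probability proportional to $d_{E_i}(v)+w_i$, outputs $v$, and sets $V_{i+1}=V_i\setminus\{v\}$ and $E_{i+1}=E_i$ minus all edges incident to $v$. From the resulting permutation of $V$, form the vertex cover consisting of, for each edge of $E$, its endpoint appearing earlier in the permutation, and let $\mathrm{ALG}(G)$ denote the size of this vertex cover. Then $$\mathbb{E}[\mathrm{ALG}(G)]\le\Big(2+2\cdot\tfrac1n\textstyle\sum_{i=1}^n w_i\Big)|\mathrm{OPT}(G)|\le(2+16/\epsilon)|\mathrm{OPT}(G)|.$$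
   Context: $d_{E_i}(v)$ is the number of edges of $E_i$ incident to $v$; $|\mathrm{OPT}(G)|$ is the size of a minimum vertex cover of $G$. *)

From HB Require Import structures.
From mathcomp Require Import all_boot all_order all_algebra.
Set Implicit Arguments. Unset Strict Implicit. Unset Printing Implicit Defensive.
Import Order.TTheory GRing.Theory Num.Theory.
Local Open Scope ring_scope.

Section VC.
Variables (T : finType) (e : rel T) (R : rcfType).

(* d_{E_i}(v): edges of E_i are the edges of E with both endpoints in V_i *)
Definition deg (V : {set T}) (v : T) : nat := #|[set u in V | e v u]|.

Definition wgt (eps : R) (n i : nat) : R :=
  (4 / eps) * Num.sqrt (n%:R / (n - i).+1%:R).

(* probability that the algorithm, started at step i with remaining vertex
   set V, outputs exactly the sequence s *)
Fixpoint seq_prob (eps : R) (n : nat) (V : {set T}) (i : nat) (s : seq T) : R :=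
  match s with
  | [::] => 1
  | v :: s' =>
      if v \in V then
        ((deg V v)%:R + wgt eps n i) / (\sum_(u in V) ((deg V u)%:R + wgt eps n i))
        * seq_prob eps n (V :\ v) i.+1 s'
      else 0
  end.

Definition alg_cover (s : seq T) : {set T} :=
  [set x | [exists y, e x y && (index x s < index y s)%N]].

Definition ALG (s : seq T) : nat := #|alg_cover s|.

Definition expected_ALG (eps : R) : R :=
  \sum_(s : #|T|.-tuple T) seq_prob eps #|T| [set: T] 1 s * (ALG s)%:R.

Definition is_vertex_cover (C : {set T}) : bool :=
  [forall x, forall y, e x y ==> (x \in C) || (y \in C)].

Definition OPT : nat := \big[minn/#|T|]_(C : {set T} | is_vertex_cover C) #|C|.

End VC.

From HB Require Import structures.
From mathcomp Require Import all_boot all_order all_algebra.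
From mathcomp Require Import ring lra zify.
Set Implicit Arguments. Unset Strict Implicit. Unset Printing Implicit Defensive.
Import Order.TTheory GRing.Theory Num.Theory.
Local Open Scope ring_scope.

(* For the set V of vertices still present, let OPT(V) be
   the minimum cover of the subgraph induced by V and
   Phi(V) = min(OPT(V), |V|/2) * H(|V|) / |V|, with H(m) = 2m + 2(w_(n+1-m) + ... + w_n).
   A step pays 1 exactly when the chosen vertex still has an edge, and in
   expectation it pays at most (2 + 2 w_i) times the expected drop of
   min(OPT, |V|/2): if OPT(V) <= |V|/2, an optimal cover of V carries at least
   half of the degree mass and each of its vertices lowers OPT by one; otherwise
   every vertex lowers |V|/2 by 1/2. As the weights increase, H(m-1)/(m-1) is at
   least 2 + 2 w_i, which turns this into E[cost + Phi(V \ v)] <= Phi(V).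
   Induction gives E[ALG] <= Phi(V) <= (2 + 2 mean(w)) OPT, and
   sum_k 1/sqrt k <= 2 sqrt n bounds the mean weight by 8/eps. *)

Section MinimumCover.
Variables (T : finType) (e : rel T).

Definition is_cover_in (V C : {set T}) : bool :=
  (C \subset V) && [forall x in V, forall y in V, e x y ==> (x \in C) || (y \in C)].

Definition opt_in (V : {set T}) : nat :=
  \big[minn/#|V|]_(C : {set T} | is_cover_in V C) #|C|.

Lemma opt_in_le V C : is_cover_in V C -> (opt_in V <= #|C|)%N.
Proof.
move=> coverC.
have := @bigmin_le_cond _ nat _ #|V| _ (is_cover_in V) (fun C : {set T} => #|C|) coverC.
by rewrite minEnat.
Qed.

Lemma opt_in_witness V : exists2 C, is_cover_in V C & #|C| = opt_in V.
Proof.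
have coverV : is_cover_in V V.
  rewrite /is_cover_in subxx /=.
  by apply/forall_inP => x xV; apply/forall_inP => y _; rewrite xV implybT.
have [C coverC] := @eq_bigmin _ nat _ #|V| _ (is_cover_in V) (fun C : {set T} => #|C|)
  coverV (fun C coverC => subset_leq_card (proj1 (andP coverC))).
by rewrite minEnat => optE; exists C; rewrite // /opt_in optE.
Qed.

Lemma opt_in_setT : opt_in [set: T] = OPT e.
Proof.
rewrite /opt_in /OPT cardsT; apply: eq_bigl => C.
rewrite /is_cover_in subsetT; apply/forall_inP/forallP => coverC x.
  by apply/forallP => y; move/forall_inP: (coverC x (in_setT x)); apply.
by move=> _; apply/forall_inP => y _; move/forallP: (coverC x); apply.
Qed.

Lemma opt_in_setD1 V C v : is_cover_in V C -> (opt_in (V :\ v) <= #|C :\ v|)%N.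
Proof.
case/andP=> sCV /forall_inP coverC; apply: opt_in_le; rewrite /is_cover_in setSD //=.
apply/forall_inP => x /setD1P[xv xV]; apply/forall_inP => y /setD1P[yv yV].
apply/implyP => exy; move/forall_inP: (coverC x xV) => /(_ y yV).
by rewrite exy !inE xv yv.
Qed.

Lemma deg_sumE V x : deg e V x = (\sum_(u in V) e x u)%N.
Proof.
rewrite /deg -sum1_card big_mkcond [RHS]big_mkcond /=; apply: eq_bigr => u _.
by rewrite inE; case: (u \in V); case: (e x u).
Qed.

Hypothesis esym : symmetric e.

(* Each edge inside V is counted twice on the left and at least once on the right. *)
Lemma sum_deg_le_cover V C : is_cover_in V C ->
  (\sum_(x in V) deg e V x <= 2 * \sum_(x in C) deg e V x)%N.
Proof.
case/andP=> sCV /forall_inP coverC.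
have inC_sum (f : T -> nat) : (\sum_(x in C) f x = \sum_(x in V) (x \in C) * f x)%N.
  rewrite [LHS]big_mkcond [RHS]big_mkcond; apply: eq_bigr => x _.
  by case xC: (x \in C); rewrite ?(subsetP sCV x xC) ?mul1n //; case: (x \in V).
have left_end : (\sum_(x in C) deg e V x = \sum_(x in V) \sum_(y in V) (x \in C) * e x y)%N.
  by rewrite inC_sum; apply: eq_bigr => x _; rewrite deg_sumE big_distrr.
have right_end : (\sum_(x in C) deg e V x = \sum_(x in V) \sum_(y in V) (y \in C) * e x y)%N.
  rewrite exchange_big inC_sum; apply: eq_bigr => y _; rewrite deg_sumE big_distrr.
  by apply: eq_bigr => x _; rewrite esym.
rewrite mul2n -addnn {1}left_end right_end -big_split; apply: leq_sum => x xV.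
rewrite deg_sumE -big_split; apply: leq_sum => y yV.
by move/forall_inP: (coverC x xV) => /(_ y yV); case: (e x y) (x \in C) (y \in C) => [] [] [].
Qed.

End MinimumCover.

Section GreedyCost.
Variables (T : finType) (e : rel T).
Hypothesis eirr : irreflexive e.

(* A vertex joins the cover of ALG exactly when it still has an edge at the
   moment it is removed. *)
Fixpoint greedy_cost (V : {set T}) (s : seq T) : nat :=
  if s is v :: s' then ((0 < deg e V v) + greedy_cost (V :\ v) s')%N else 0%N.

Definition earlier_nbr (s : seq T) (x : T) : bool :=
  [exists y, [&& y \in s, e x y & (index x s < index y s)%N]].

Lemma earlier_nbr_head v s : earlier_nbr (v :: s) v = has (e v) s.
Proof.
apply/existsP/hasP => [[y /and3P[]]|[y ys evy]].
  by rewrite inE => /predU1P[-> | ys evy _]; [rewrite eirr | exists y].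
exists y; rewrite inE ys orbT evy /= eqxx.
by case: eqP => // vy; rewrite vy eirr in evy.
Qed.

Lemma earlier_nbr_cons v s x : v \notin s -> x \in s ->
  earlier_nbr (v :: s) x = earlier_nbr s x.
Proof.
move=> vs xs; have xv : v != x by apply: contraNneq vs => ->.
apply/existsP/existsP => [[y /and3P[]]|[y /and3P[ys exy lt_xy]]].
  rewrite /= (negbTE xv) inE => /predU1P[-> | ys exy]; first by rewrite eqxx.
  have /negbTE-> : v != y by apply: contraNneq vs => ->.
  by exists y; rewrite ys exy.
have /negbTE vy : v != y by apply: contraNneq vs => ->.
by exists y; rewrite inE ys orbT exy /= (negbTE xv) vy.
Qed.

Lemma greedy_cost_count s : uniq s ->
  greedy_cost [set x in s] s = count (earlier_nbr s) s.
Proof.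
elim: s => [|v s IH] //= /andP[vs us].
have -> : [set x in v :: s] :\ v = [set x in s].
  by apply/setP => x; rewrite !inE; case: eqVneq => // ->; rewrite (negbTE vs).
have -> : (0 < deg e [set x in v :: s] v)%N = has (e v) s.
  rewrite /deg card_gt0; apply/set0Pn/hasP => [[y]|[y ys evy]].
    by rewrite !inE => /andP[/predU1P[-> | ys] evy]; [rewrite eirr in evy | exists y].
  by exists y; rewrite !inE ys orbT evy.
rewrite earlier_nbr_head IH //; congr (_ + _)%N.
by apply: eq_in_count => x xs; rewrite earlier_nbr_cons.
Qed.

Lemma ALG_greedy_cost s : uniq s -> size s = #|T| -> ALG e s = greedy_cost [set: T] s.
Proof.
move=> us size_s.
have s_full x : x \in s.
  have /subset_cardP : #|s| = #|T| by rewrite (card_uniqP us).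
  by move=> /(_ (subset_predT _)) /(_ x); rewrite !inE.
have -> : [set: T] = [set x in s] by apply/setP => x; rewrite !inE s_full.
rewrite greedy_cost_count // -size_filter -(card_uniqP (filter_uniq _ us)).
apply: eq_card => x; rewrite !inE mem_filter s_full andbT.
by apply/existsP/existsP => [[y /andP[exy lt_xy]]|[y /and3P[_ exy lt_xy]]];
  exists y; rewrite ?s_full exy.
Qed.

End GreedyCost.

Section Weights.
Variables (R : rcfType) (eps : R).
Hypothesis eps_gt0 : 0 < eps.

Lemma wgt_ge0 n i : 0 <= wgt eps n i.
Proof. by rewrite /wgt mulr_ge0 ?sqrtr_ge0 // divr_ge0 // ltW. Qed.

Lemma wgt_gt0 n i : (0 < n)%N -> 0 < wgt eps n i.
Proof. by move=> n_gt0; rewrite /wgt mulr_gt0 ?divr_gt0 // sqrtr_gt0 divr_gt0 ?ltr0n. Qed.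

Lemma wgt_homo n i j : (i <= j)%N -> wgt eps n i <= wgt eps n j.
Proof.
move=> le_ij; rewrite /wgt ler_pM2l ?divr_gt0 // ler_sqrt ?divr_ge0 //.
by rewrite ler_wpM2l // lef_pV2 ?posrE ?ltr0n // ler_nat ltnS leq_sub2l.
Qed.

(* Telescoping against sqrt(k+1) - sqrt k >= 1 / (2 sqrt(k+1)). *)
Lemma sum_sqrt_ratio_le n k : (k <= n)%N ->
  \sum_(n.+1 - k <= j < n.+1) Num.sqrt (n%:R / (n - j).+1%:R : R)
    <= 2 * Num.sqrt (n%:R * k%:R).
Proof.
elim: k => [|k IH] le_kn; first by rewrite subn0 big_geq // mulr0 sqrtr0 mulr0.
rewrite big_ltn; last by lia.
have -> : ((n.+1 - k.+1).+1 = n.+1 - k)%N by lia.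
have -> : ((n - (n.+1 - k.+1)).+1 = k.+1)%N by lia.
apply: le_trans (lerD (lexx _) (IH (ltnW le_kn))) _.
rewrite !sqrtrM ?ler0n // sqrtrV ?ler0n //.
set s := Num.sqrt (n%:R : R); set a := Num.sqrt (k%:R : R); set b := Num.sqrt (k.+1%:R : R).
have s_ge0 : 0 <= s by apply: sqrtr_ge0.
have b_gt0 : 0 < b by rewrite sqrtr_gt0 ltr0n.
have a2 : a ^+ 2 = k%:R by rewrite sqr_sqrtr ?ler0n.
have b2 : b ^+ 2 = k%:R + 1 by rewrite sqr_sqrtr ?ler0n // -natr1.
have sqrt_step : b^-1 + 2 * a <= 2 * b.
  rewrite -(ler_pM2r b_gt0) mulrDl mulVf ?gt_eqF //.
  have : 0 <= (a - b) ^+ 2 by apply: sqr_ge0.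
  rewrite !expr2 in a2 b2 *; nra.
have := ler_wpM2l s_ge0 sqrt_step; rewrite mulrDr; nra.
Qed.

Lemma mean_wgt_le n : n%:R^-1 * \sum_(1 <= i < n.+1) wgt eps n i <= 8 / eps.
Proof.
case: n => [|n]; first by rewrite invr0 mul0r divr_ge0 // ltW.
have := sum_sqrt_ratio_le (leqnn n.+1); rewrite subSnn.
rewrite sqrtrM ?ler0n // -expr2 sqr_sqrtr ?ler0n // /wgt -mulr_sumr => sum_le.
have n_pos : 0 < n.+1%:R :> R by rewrite ltr0n.
apply: le_trans (_ : n.+1%:R^-1 * (4 / eps * (2 * n.+1%:R)) <= _).
  apply: ler_wpM2l; first by rewrite invr_ge0 ltW.
  by apply: ler_wpM2l => //; rewrite divr_ge0 // ltW.
have -> : n.+1%:R^-1 * (4 / eps * (2 * n.+1%:R)) = 8 / eps.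
  by field; rewrite gt_eqF //= nat1r gt_eqF.
by [].
Qed.

End Weights.

Lemma big_tuple_cons (R : nmodType) (T : finType) k (F : k.+1.-tuple T -> R) :
  \sum_(s : k.+1.-tuple T) F s = \sum_(v : T) \sum_(t : k.-tuple T) F [tuple of v :: t].
Proof.
rewrite pair_big (reindex (fun p : T * k.-tuple T => [tuple of p.1 :: p.2])) //=.
exists (fun s : k.+1.-tuple T => (thead s, [tuple of behead s])) => [[v t]|s] _.
  by congr (_, _); apply: val_inj.
by apply: val_inj; rewrite /= [in RHS](tuple_eta s).
Qed.

(* The induction step of the potential argument: [c] is the price 2 + 2 w_i of
   one step, [H / k] the potential per unit of capped optimum after it. *)
Lemma potential_step_le (R : realFieldType) (c H cost F delta : R) (k : nat) :
  0 <= c -> 0 <= F -> c * k%:R <= H -> cost <= c * delta ->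
  F <= k.+1%:R * delta -> delta <= F ->
  cost + H / k%:R * (F - delta) <= F * (H + c) / k.+1%:R.
Proof.
move=> c_ge0 F_ge0 H_ge cost_le F_le delta_le.
case: k H_ge F_le => [|k] H_ge F_le.
  by rewrite mulr0 in H_ge; rewrite invr0 mulr0 mul0r addr0 divr1; nra.
set q := H / k.+1%:R.
have k_gt0 : 0 < k.+1%:R :> R by rewrite ltr0n.
have HE : H = q * k.+1%:R by rewrite divfK ?gt_eqF.
have c_le_q : c <= q by rewrite ler_pdivlMr.
rewrite ler_pdivlMr ?ltr0n // HE.
have kS : k.+2%:R = k.+1%:R + 1 :> R by rewrite -natr1.
rewrite kS -subr_ge0 in F_le; rewrite -subr_ge0 in c_le_q.
have := mulr_ge0 c_le_q F_le; nra.
Qed.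

Section Algorithm.
Variables (R : rcfType) (T : finType) (e : rel T) (eps : R) (n : nat).
Hypothesis eps_gt0 : 0 < eps.
Implicit Types (V : {set T}) (i : nat) (v : T) (s : seq T).

Definition pick_weight (V : {set T}) (i : nat) (v : T) : R :=
  (deg e V v)%:R + wgt eps n i.

Definition pick_total (V : {set T}) (i : nat) : R := \sum_(u in V) pick_weight V i u.

Definition pick_prob (V : {set T}) (i : nat) (v : T) : R :=
  pick_weight V i v / pick_total V i.

Lemma seq_prob_cons V i v s :
  seq_prob e eps n V i (v :: s) =
  if v \in V then pick_prob V i v * seq_prob e eps n (V :\ v) i.+1 s else 0.
Proof. by []. Qed.

Lemma pick_totalE V i :
  pick_total V i = \sum_(u in V) (deg e V u)%:R + #|V|%:R * wgt eps n i.
Proof. by rewrite /pick_total big_split /= sumr_const mulr_natl. Qed.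

Lemma pick_total_gt0 V i : (0 < n)%N -> (0 < #|V|)%N -> 0 < pick_total V i.
Proof.
move=> n_gt0 V_gt0; rewrite pick_totalE ltr_wpDl ?sumr_ge0 //.
by rewrite mulr_gt0 ?ltr0n ?wgt_gt0.
Qed.

Lemma pick_prob_ge0 V i v : 0 <= pick_prob V i v.
Proof.
by rewrite divr_ge0 ?sumr_ge0 // => [|u _]; rewrite addr_ge0 ?wgt_ge0.
Qed.

Lemma sum_pick_prob V i : (0 < n)%N -> (0 < #|V|)%N -> \sum_(v in V) pick_prob V i v = 1.
Proof. by move=> n_gt0 V_gt0; rewrite -mulr_suml divff // gt_eqF // pick_total_gt0. Qed.

Lemma sum_seq_prob k V i : (0 < n)%N -> #|V| = k ->
  \sum_(s : k.-tuple T) seq_prob e eps n V i s = 1.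
Proof.
move=> n_gt0; elim: k V i => [|k IH] V i cardV.
  by rewrite (eq_bigr (fun _ => 1)) ?sumr_const ?card_tuple // => s _; rewrite tuple0.
rewrite big_tuple_cons (eq_bigr (fun v => if v \in V then pick_prob V i v else 0)).
  by rewrite -big_mkcond sum_pick_prob ?cardV.
move=> v _; under eq_bigr => t _ do rewrite seq_prob_cons.
case: ifP => vV; last by rewrite big1.
by rewrite -mulr_sumr IH ?mulr1 //; move: cardV; rewrite (cardsD1 v V) vV => -[].
Qed.

Lemma seq_prob_support s V i : seq_prob e eps n V i s != 0 -> uniq s /\ {subset s <= V}.
Proof.
elim: s V i => [|v s IH] V i //= seqP_neq0.
move: seqP_neq0; case: ifP => vV; last by rewrite eqxx.
rewrite mulf_eq0 negb_or => /andP[_ /IH[us sub_s]].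
have vs : v \notin s by apply/negP => /sub_s; rewrite !inE eqxx.
split; first by rewrite vs.
by move=> x /predU1P[-> //| /sub_s /setD1P[]].
Qed.

(* min(OPT, |V|/2): the first argument makes a step that removes a vertex of an
   optimal cover pay off, the second a step that removes any vertex at all. *)
Definition capped_opt V : R := Num.min (opt_in e V)%:R (#|V|%:R / 2).

Definition budget (m : nat) : R :=
  2 * m%:R + 2 * \sum_(n.+1 - m <= j < n.+1) wgt eps n j.

(* At V = set0 this is 0 because 0^-1 = 0. *)
Definition potential V : R := capped_opt V * budget #|V| / #|V|%:R.

Definition expected_cost V i : R :=
  \sum_(v in V) pick_prob V i v * (0 < deg e V v)%:R.

Definition expected_drop V i : R :=
  \sum_(v in V) pick_prob V i v * (capped_opt V - capped_opt (V :\ v)).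

Lemma capped_opt_ge0 V : 0 <= capped_opt V.
Proof. by rewrite le_min ler0n divr_ge0. Qed.

Lemma capped_opt_le_opt V : capped_opt V <= (opt_in e V)%:R.
Proof. by rewrite ge_min lexx. Qed.

Lemma capped_opt_le_half V : capped_opt V <= #|V|%:R / 2.
Proof. by rewrite ge_min lexx orbT. Qed.

Lemma budgetS m : (m <= n)%N -> budget m.+1 = budget m + (2 + 2 * wgt eps n (n - m)).
Proof.
move=> le_mn; rewrite /budget subSS big_ltn ?ltnS ?leq_subr //.
have -> : ((n - m).+1 = n.+1 - m)%N by lia.
by rewrite -natr1; ring.
Qed.

Lemma budget_ge m : (m <= n)%N -> (2 + 2 * wgt eps n (n - m)) * m%:R <= budget m.
Proof.
move=> le_mn; rewrite /budget mulrDl mulrC lerD2l -mulrA ler_wpM2l //.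
rewrite -[m in m%:R](subKn (leq_trans le_mn (leqnSn n))) -sumr_const_nat mulr_sumr.
apply: ler_sum_nat => j /andP[lt_j _]; rewrite mulr1 wgt_homo //; lia.
Qed.

Lemma expected_cost_le V i :
  expected_cost V i <= (1 + wgt eps n i) * (\sum_(u in V) (deg e V u)%:R) / pick_total V i.
Proof.
rewrite /expected_cost mulr_sumr mulr_suml; apply: ler_sum => v _.
rewrite /pick_prob mulrAC; apply: ler_wpM2r.
  by rewrite invr_ge0 sumr_ge0 // => u _; rewrite addr_ge0 ?wgt_ge0.
rewrite /pick_weight; case: (deg e V v) => [|d]; first by rewrite !mulr0.
have : 1 <= d.+1%:R :> R by rewrite ler1n.
have := wgt_ge0 eps_gt0 n i; rewrite mulr1; nra.
Qed.

Lemma expected_dropE V i : (0 < n)%N -> (0 < #|V|)%N ->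
  expected_drop V i = capped_opt V - \sum_(v in V) pick_prob V i v * capped_opt (V :\ v).
Proof.
move=> n_gt0 V_gt0; rewrite /expected_drop.
under eq_bigr => v _ do rewrite mulrBr.
by rewrite sumrB -mulr_suml sum_pick_prob // mul1r.
Qed.

Lemma expected_drop_le V i : (0 < n)%N -> (0 < #|V|)%N -> expected_drop V i <= capped_opt V.
Proof.
move=> n_gt0 V_gt0; rewrite expected_dropE // gerBl.
by apply: sumr_ge0 => v _; rewrite mulr_ge0 ?pick_prob_ge0 ?capped_opt_ge0.
Qed.

Lemma capped_opt_drop_ge_cover V C v : (2 * opt_in e V <= #|V|)%N ->
  is_cover_in e V C -> #|C| = opt_in e V ->
  (v \in C)%:R <= capped_opt V - capped_opt (V :\ v).
Proof.
move=> small coverC cardC.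
have -> : capped_opt V = #|C|%:R.
  by rewrite /capped_opt min_l -cardC // ler_pdivlMr // -natrM ler_nat mulnC cardC.
rewrite (cardsD1 v C) natrD lerBrDr lerD2l.
apply: le_trans (capped_opt_le_opt _) _.
by rewrite ler_nat opt_in_setD1.
Qed.

Lemma capped_opt_drop_ge_half V v : (#|V| < 2 * opt_in e V)%N -> v \in V ->
  1 / 2 <= capped_opt V - capped_opt (V :\ v).
Proof.
move=> large vV; have := capped_opt_le_half (V :\ v).
have -> : capped_opt V = #|V|%:R / 2.
  by rewrite /capped_opt min_r // ler_pdivrMr // -natrM ler_nat mulnC ltnW.
rewrite (cardsD1 v V) vV add1n -natr1; lra.
Qed.

Hypothesis esym : symmetric e.

Section ExpectedBounds.
Variables (V : {set T}) (i : nat).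
Hypotheses (n_gt0 : (0 < n)%N) (V_gt0 : (0 < #|V|)%N).

Let w := wgt eps n i.
Let D := \sum_(u in V) (deg e V u)%:R : R.

Lemma expected_bounds_small_opt : (2 * opt_in e V <= #|V|)%N ->
  expected_cost V i <= (2 + 2 * w) * expected_drop V i
  /\ capped_opt V <= #|V|%:R * expected_drop V i.
Proof.
move=> small; have [C coverC cardC] := opt_in_witness e V.
have sCV : C \subset V by case/andP: coverC.
set SC := \sum_(u in C) (deg e V u)%:R : R.
have Z_gt0 := pick_total_gt0 i n_gt0 V_gt0.
have w_ge0 : 0 <= w := wgt_ge0 eps_gt0 n i.
have SC_ge0 : 0 <= SC by rewrite sumr_ge0.
have D_le : D <= 2 * SC.
  by rewrite /D /SC -!natr_sum -natrM ler_nat sum_deg_le_cover.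
have drop_ge : (SC + (opt_in e V)%:R * w) / pick_total V i <= expected_drop V i.
  have -> : SC + (opt_in e V)%:R * w = \sum_(v in V | v \in C) pick_weight V i v.
    rewrite -cardC (eq_bigl (mem C)) => [|v]; last by rewrite andb_idl // => /(subsetP sCV).
    by rewrite big_split /= sumr_const mulr_natl.
  rewrite mulr_suml big_mkcondr; apply: ler_sum => v _.
  have p_ge0 := pick_prob_ge0 V i v.
  have := capped_opt_drop_ge_cover v small coverC cardC.
  case: (v \in C) => /= drop_ge; last by rewrite mulr_ge0.
  by apply: le_trans (ler_wpM2l p_ge0 drop_ge); rewrite mulr1.
have c_ge0 : 0 <= 2 + 2 * w by lra.
have opt_ge0 : 0 <= (opt_in e V)%:R :> R by [].
split.
  apply: le_trans (expected_cost_le V i) (le_trans _ (ler_wpM2l c_ge0 drop_ge)).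
  rewrite mulrA; apply: ler_wpM2r; first by rewrite invr_ge0 ltW.
  rewrite -/w -/D; nra.
apply: le_trans (ler_wpM2l (ler0n _ _) drop_ge).
rewrite mulrA ler_pdivlMr // pick_totalE -/D.
have : 2 * (opt_in e V)%:R <= #|V|%:R :> R by rewrite -natrM ler_nat.
rewrite /capped_opt min_l; last by rewrite ler_pdivlMr // -natrM ler_nat mulnC.
move=> two_opt_le; rewrite -/w.
have := ler_wpM2r SC_ge0 two_opt_le; have := ler_wpM2l opt_ge0 D_le; nra.
Qed.

Lemma expected_bounds_large_opt : (#|V| < 2 * opt_in e V)%N ->
  expected_cost V i <= (2 + 2 * w) * expected_drop V i
  /\ capped_opt V <= #|V|%:R * expected_drop V i.
Proof.
move=> large.
have drop_ge : 1 / 2 <= expected_drop V i.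
  have -> : 1 / 2 = \sum_(v in V) pick_prob V i v * (1 / 2) :> R.
    by rewrite -mulr_suml sum_pick_prob ?mul1r.
  apply: ler_sum => v vV; apply: ler_wpM2l; first exact: pick_prob_ge0.
  exact: capped_opt_drop_ge_half large vV.
have Z_gt0 := pick_total_gt0 i n_gt0 V_gt0.
have w_ge0 : 0 <= w := wgt_ge0 eps_gt0 n i.
split.
  apply: le_trans (expected_cost_le V i) _.
  have D_le : D <= pick_total V i by rewrite pick_totalE lerDl mulr_ge0.
  rewrite ler_pdivrMr // -/w -/D.
  have drop_ge' : 0 <= expected_drop V i - 1 / 2 by rewrite subr_ge0.
  have := mulr_ge0 (ltW Z_gt0) drop_ge'; nra.
apply: le_trans (capped_opt_le_half V) _.
by rewrite -[X in X / 2]mulr1 -mulrA; apply: ler_wpM2l.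
Qed.

End ExpectedBounds.

Lemma potential_step V i : (0 < i)%N -> (0 < #|V|)%N -> (i + #|V| = n.+1)%N ->
  \sum_(v in V) pick_prob V i v * ((0 < deg e V v)%:R + potential (V :\ v))
    <= potential V.
Proof.
move=> i_gt0 V_gt0 iV; have n_gt0 : (0 < n)%N by lia.
have [cost_le capped_le] : expected_cost V i <= (2 + 2 * wgt eps n i) * expected_drop V i
    /\ capped_opt V <= #|V|%:R * expected_drop V i.
  have [small|large] := leqP (2 * opt_in e V) #|V|.
    exact: expected_bounds_small_opt.
  exact: expected_bounds_large_opt.
have drop_le := expected_drop_le i n_gt0 V_gt0.
have [k cardV] : exists k, #|V| = k.+1 by exists #|V|.-1; rewrite prednK.
have cardVv v : v \in V -> #|V :\ v| = k.
  by move=> vV; move: cardV; rewrite (cardsD1 v V) vV => -[].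
have iE : i = (n - k)%N by lia.
rewrite cardV in capped_le; rewrite /potential cardV; subst i.
have -> : \sum_(v in V) pick_prob V (n - k) v *
            ((0 < deg e V v)%:R + capped_opt (V :\ v) * budget #|V :\ v| / #|V :\ v|%:R)
    = expected_cost V (n - k) + budget k / k%:R * (capped_opt V - expected_drop V (n - k)).
  rewrite expected_dropE ?cardV // subKr mulr_sumr -big_split.
  by apply: eq_bigr => v vV; rewrite /= cardVv //; ring.
rewrite budgetS; last by lia.
apply: potential_step_le => //.
- by have := wgt_ge0 eps_gt0 n (n - k); lra.
- exact: capped_opt_ge0.
- by apply: budget_ge; lia.
Qed.

Lemma expected_greedy_cost_le k V i : #|V| = k -> (0 < i)%N -> (i + k = n.+1)%N ->
  \sum_(s : k.-tuple T) seq_prob e eps n V i s * (greedy_cost e V s)%:R <= potential V.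
Proof.
elim: k V i => [|k IH] V i cardV i_gt0 ik.
  rewrite big1 => [|s _]; last by rewrite tuple0 mulr0.
  by rewrite /potential cardV invr0 mulr0.
have n_gt0 : (0 < n)%N by lia.
have V_gt0 : (0 < #|V|)%N by rewrite cardV.
have iV : (i + #|V| = n.+1)%N by rewrite cardV.
rewrite big_tuple_cons; apply: le_trans (potential_step i_gt0 V_gt0 iV).
rewrite [X in _ <= X]big_mkcond; apply: ler_sum => v _.
under eq_bigr => t _ do rewrite seq_prob_cons.
case: ifP => vV; last by rewrite big1 // => t _; rewrite mul0r.
have cardVv : #|V :\ v| = k by move: cardV; rewrite (cardsD1 v V) vV => -[].
under eq_bigr => t _ do rewrite [greedy_cost _ _ _]/= natrD -mulrA mulrDr.
rewrite -mulr_sumr big_split /= !mulrDr; apply: lerD.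
  by rewrite -mulr_suml sum_seq_prob // mul1r.
by apply: ler_wpM2l; [exact: pick_prob_ge0 | apply: IH => //; lia].
Qed.

Lemma potential_setT_le : #|T| = n ->
  potential [set: T]
    <= (2 + 2 * (n%:R^-1 * \sum_(1 <= i < n.+1) wgt eps n i)) * (OPT e)%:R.
Proof.
rewrite /potential cardsT => ->; case: (posnP n) => [->|n_gt0].
  by rewrite invr0 !mulr0 mul0r mulr0 addr0 mulr_ge0.
have budgetE : budget n / n%:R = 2 + 2 * (n%:R^-1 * \sum_(1 <= i < n.+1) wgt eps n i).
  by rewrite /budget subSnn; field; rewrite pnatr_eq0 -lt0n.
rewrite -mulrA budgetE mulrC -opt_in_setT; apply: ler_wpM2l.
  by rewrite addr_ge0 ?mulr_ge0 ?invr_ge0 ?sumr_ge0 // => i _; rewrite wgt_ge0.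
exact: capped_opt_le_opt.
Qed.

End Algorithm.

Theorem mainTheorem7 (R : rcfType) (T : finType) (e : rel T)
    (esym : symmetric e) (eirr : irreflexive e) (eps : R) (heps : 0 < eps) :
  let n := #|T| in
  expected_ALG e eps <=
    (2 + 2 * (n%:R^-1 * \sum_(1 <= i < n.+1) wgt eps n i)) * (OPT e)%:R
  /\ (2 + 2 * (n%:R^-1 * \sum_(1 <= i < n.+1) wgt eps n i)) * (OPT e)%:R
     <= (2 + 16 / eps) * (OPT e)%:R.
Proof.
move=> n; split.
  have -> : expected_ALG e eps =
      \sum_(s : n.-tuple T) seq_prob e eps n [set: T] 1 s * (greedy_cost e [set: T] s)%:R.
    apply: eq_bigr => s _.
    have [-> | /seq_prob_support[us _]] := eqVneq (seq_prob e eps n [set: T] 1 s) 0.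
      by rewrite !mul0r.
    by rewrite ALG_greedy_cost // size_tuple.
  apply: le_trans (potential_setT_le e heps (erefl n)).
  by apply: expected_greedy_cost_le; rewrite ?cardsT ?add1n.
apply: ler_wpM2r => //; rewrite lerD2l (_ : 16 / eps = 2 * (8 / eps)).
  by apply: ler_wpM2l => //; exact: mean_wgt_le.
by field; rewrite gt_eqF.
Qed.
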